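(* Let $r\geq 1$, let $\mathbf a=(a_1,\ldots,a_r)$ be positive integers, and let $D$ be a positive common multiple of $a_1,\ldots,a_r$. Then for every integer $n\geq 0$, $$p_{\mathbf a}(n) = \sum_{j=0}^{\lfloor n/D\rfloor} \binom{r+j-1}{j} f_{\mathbf a}(n-jD).$$
   Context: $p_{\mathbf a}(n)$ is the restricted partition function: the number of integer solutions $(x_1,\ldots,x_r)$ of $a_1x_1+\cdots+a_rx_r=n$ with all $x_i\geq 0$. For $n\geq 0$, $f_{\mathbf a}(n)$ denotes the number of integer tuples $(j_1,\ldots,j_r)$ with $a_1j_1+\cdots+a_rj_r=n$ and $0\leq j_k\leq \frac{D}{a_k}-1$ for $1\leq k\leq r$. *)

From mathcomp Require Import all_boot.
Set Implicit Arguments. Unset Strict Implicit. Unset Printing Implicit Defensive.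

(* Each x_i ranges over 'I_(n.+1), i.e. 0 <= x_i <= n;
   this is no restriction when all a_i >= 1 (since a_i x_i <= n forces x_i <= n). *)
Definition rpart {r : nat} (a : 'I_r -> nat) (n : nat) : nat :=
  #|[set x : {ffun 'I_r -> 'I_n.+1} | \sum_(i < r) a i * x i == n]|.

(* f_a(n): number of (j_1..j_r) with sum a_k j_k = n and 0 <= j_k <= D/a_k - 1,
   i.e. j_k < D %/ a_k (D is a multiple of each a_k, so D/a_k is an integer <= D). *)
Definition fpart {r : nat} (a : 'I_r -> nat) (D n : nat) : nat :=
  #|[set j : {ffun 'I_r -> 'I_D.+1} |
      [forall k, j k < D %/ a k] && (\sum_(k < r) a k * j k == n)]|.

From mathcomp Require Import all_boot.
Set Implicit Arguments. Unset Strict Implicit. Unset Printing Implicit Defensive.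

(* Put b_i = D / a_i, so that a_i b_i = D. Dividing each x_i by b_i, x_i = q_i b_i + j_i with
   0 <= j_i < b_i, turns a_1 x_1 + ... + a_r x_r = n into
   (q_1 + ... + q_r) D + a_1 j_1 + ... + a_r j_r = n. Grouping the solutions by
   m = q_1 + ... + q_r, the quotients range over the C(r+m-1, m) weak compositions of m into
   r parts and, independently, the remainders over the f_a(n - mD) tuples counted by f_a. *)

Lemma leq_summand (I : finType) (F : I -> nat) i : F i <= \sum_j F j.
Proof. by rewrite (bigD1 i) //= leq_addr. Qed.

Lemma card_in_bij (T T' : finType) (A : {pred T}) (B : {pred T'})
    (f : T -> T') (g : T' -> T) :
  {in A, forall x, f x \in B} -> {in B, forall y, g y \in A} ->
  {in A, cancel f g} -> {in B, cancel g f} -> #|A| = #|B|.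
Proof.
move=> fAB gBA fK gK; rewrite -(card_in_imset (can_in_inj fK)).
apply: eq_card => y; apply/imsetP/idP => [[x xA ->] | yB]; first exact: fAB.
by exists (g y); rewrite ?gK ?gBA.
Qed.

Definition compositions r m :=
  [set q : {ffun 'I_r -> 'I_m.+1} | \sum_i (q i : nat) == m].

Lemma card_compositions r m : #|compositions r m| = 'C(r + m - 1, m).
Proof.
case: r => [|r].
  have -> : compositions 0 m = if m == 0 then setT else set0.
    by apply/setP => q; rewrite inE big_ord0 eq_sym; case: (m == 0); rewrite inE.
  case: m => [|m]; last by rewrite cards0 bin_small // subn1.
  by rewrite cardsT card_ffun !card_ord.
rewrite addSn subn1 /= -[X in 'C(_, X)](addKn r m) bin_sub ?leq_addr //.
rewrite -card_ord_partitions -!sum1dep_card.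
rewrite (reindex (fun t : r.+1.-tuple 'I_m.+1 => [ffun i => tnth t i])) /=.
  apply: eq_bigl => t; rewrite big_tuple; congr (_ == _).
  by apply: eq_bigr => i _; rewrite ffunE.
exists (fun q : {ffun 'I_r.+1 -> 'I_m.+1} => [tuple q i | i < r.+1]) => /= [t _|q _].
  by apply: eq_from_tnth => i; rewrite tnth_mktuple ffunE.
by apply/ffunP => i; rewrite ffunE tnth_mktuple.
Qed.

Section DivmodDecomposition.

Variables (r : nat) (a : 'I_r -> nat) (D : nat).
Hypotheses (D_gt0 : 0 < D) (a_dvd_D : forall i, a i %| D).

Local Notation b i := (D %/ a i).

Lemma a_mul_b i : a i * b i = D.
Proof. by rewrite mulnC divnK. Qed.

Lemma a_gt0 i : 0 < a i.
Proof. exact: dvdn_gt0 D_gt0 (a_dvd_D i). Qed.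

Lemma b_gt0 i : 0 < b i.
Proof. by rewrite divn_gt0 ?a_gt0 // dvdn_leq. Qed.

Lemma leq_weighted_sum (x : 'I_r -> nat) i : x i <= \sum_k a k * x k.
Proof. exact: leq_trans (leq_pmull _ (a_gt0 i)) (leq_summand (fun k => a k * x k) i). Qed.

Lemma weighted_sum_mulD (q j : 'I_r -> nat) :
  \sum_i a i * (q i * b i + j i) = (\sum_i q i) * D + \sum_i a i * j i.
Proof.
rewrite big_distrl -big_split; apply: eq_bigr => i _.
by rewrite mulnDr mulnCA a_mul_b.
Qed.

Lemma weighted_sum_divmod (x : 'I_r -> nat) :
  \sum_i a i * x i = (\sum_i x i %/ b i) * D + \sum_i a i * (x i %% b i).
Proof. by rewrite -weighted_sum_mulD; apply: eq_bigr => i _; rewrite -divn_eq. Qed.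

Definition rpart_fiber n m :=
  [set x : {ffun 'I_r -> 'I_n.+1} |
    (\sum_i a i * x i == n) && (\sum_i x i %/ b i == m)].

Lemma rpart_sum_fibers n : rpart a n = \sum_(m < (n %/ D).+1) #|rpart_fiber n m|.
Proof.
rewrite /rpart -sum1dep_card (partition_big
  (fun x : {ffun _ -> 'I_n.+1} => inord (\sum_i x i %/ b i) : 'I_(n %/ D).+1) xpredT) //=.
apply: eq_bigr => m _; rewrite -sum1dep_card; apply: eq_bigl => x.
have [sum_x | //] := eqVneq; rewrite -val_eqE /= inordK // ltnS leq_divRL //.
by rewrite -[leqRHS]sum_x weighted_sum_divmod leq_addr.
Qed.

Definition residues k :=
  [set j : {ffun 'I_r -> 'I_D.+1} | [forall i, j i < b i] && (\sum_i a i * j i == k)].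

Section Fiber.

Variables n m : nat.
Hypothesis mD_le_n : m * D <= n.

Local Notation Q := {ffun 'I_r -> 'I_m.+1}.
Local Notation J := {ffun 'I_r -> 'I_D.+1}.
Local Notation fiber := (rpart_fiber n m).
Local Notation pairs := (setX (compositions r m) (residues (n - m * D))).

Definition split_divmod (x : {ffun 'I_r -> 'I_n.+1}) : Q * J :=
  ([ffun i => inord (x i %/ b i)], [ffun i => inord (x i %% b i)]).

Definition join_divmod (qj : Q * J) : {ffun 'I_r -> 'I_n.+1} :=
  [ffun i => inord (qj.1 i * b i + qj.2 i)].

Lemma split_divmodE x i : x \in fiber ->
  (split_divmod x).1 i = x i %/ b i :> nat /\ (split_divmod x).2 i = x i %% b i :> nat.
Proof.
rewrite inE => /andP[_ /eqP sum_q]; rewrite !ffunE !inordK //.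
  by rewrite ltnS (leq_trans (ltnW (ltn_pmod _ (b_gt0 i)))) ?leq_div.
by rewrite ltnS -sum_q (leq_summand (fun k => x k %/ b k)).
Qed.

Lemma split_divmod_pairs x : x \in fiber -> split_divmod x \in pairs.
Proof.
move=> x_fib; have q_val i := proj1 (split_divmodE i x_fib).
have j_val i := proj2 (split_divmodE i x_fib).
move: x_fib; rewrite !inE => /andP[/eqP sum_x /eqP sum_q].
apply/and3P; split.
- by apply/eqP; rewrite -[RHS]sum_q; apply: eq_bigr => i _; rewrite q_val.
- by apply/forallP => i; rewrite j_val ltn_pmod ?b_gt0.
- apply/eqP/(@addnI (m * D)); rewrite subnKC // -[RHS]sum_x [RHS]weighted_sum_divmod sum_q.
  by congr (_ + _); apply: eq_bigr => i _; rewrite j_val.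
Qed.

Lemma pairs_weighted_sum qj : qj \in pairs ->
  \sum_i a i * (qj.1 i * b i + qj.2 i) = n.
Proof.
rewrite !inE => /andP[/eqP sum_q /andP[_ /eqP sum_j]].
by rewrite weighted_sum_mulD sum_q sum_j subnKC.
Qed.

Lemma join_divmodE qj i : qj \in pairs -> join_divmod qj i = qj.1 i * b i + qj.2 i :> nat.
Proof.
move=> qj_P; rewrite ffunE inordK // ltnS -[leqRHS](pairs_weighted_sum qj_P).
exact: (leq_weighted_sum (fun k => qj.1 k * b k + qj.2 k)).
Qed.

Lemma join_divmodK qj i : qj \in pairs ->
  join_divmod qj i %/ b i = qj.1 i /\ join_divmod qj i %% b i = qj.2 i.
Proof.
move=> qj_P; rewrite join_divmodE // divnMDl ?b_gt0 // modnMDl.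
move: qj_P; rewrite !inE => /and3P[_ /forallP lt_b _].
by rewrite divn_small ?modn_small ?addn0 ?lt_b.
Qed.

Lemma join_divmod_fiber qj : qj \in pairs -> join_divmod qj \in fiber.
Proof.
move=> qj_P; rewrite inE; apply/andP; split; apply/eqP.
  by rewrite -[RHS](pairs_weighted_sum qj_P); apply: eq_bigr => i _; rewrite join_divmodE.
move: (qj_P); rewrite !inE => /andP[/eqP sum_q _]; rewrite -[RHS]sum_q.
by apply: eq_bigr => i _; case: (join_divmodK i qj_P).
Qed.

Lemma card_rpart_fiber : #|fiber| = #|compositions r m| * fpart a D (n - m * D).
Proof.
rewrite /fpart -cardsX.
apply: (card_in_bij (f := split_divmod) (g := join_divmod)) => [x | qj | x x_fib | qj qj_P].
- exact: split_divmod_pairs.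
- exact: join_divmod_fiber.
- apply/ffunP => i; apply: val_inj => /=.
  rewrite join_divmodE ?split_divmod_pairs //.
  by case: (split_divmodE i x_fib) => -> ->; rewrite -divn_eq.
- rewrite [RHS]surjective_pairing; congr pair; apply/ffunP => i; apply: val_inj => /=;
    have [q_val j_val] := split_divmodE i (join_divmod_fiber qj_P);
    have [q_eq j_eq] := join_divmodK i qj_P; by rewrite ?q_val ?j_val ?q_eq ?j_eq.
Qed.

End Fiber.

End DivmodDecomposition.

Theorem proposition2p2 (r : nat) (a : 'I_r -> nat) (D : nat) :
  1 <= r ->
  (forall i, 0 < a i) ->
  0 < D ->
  (forall i, a i %| D) ->
  forall n : nat,
    rpart a n =
    \sum_(0 <= j < (n %/ D).+1) 'C(r + j - 1, j) * fpart a D (n - j * D).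
Proof.
move=> _ _ D_gt0 a_dvd_D n.
rewrite (rpart_sum_fibers D_gt0 a_dvd_D) big_mkord; apply: eq_bigr => m _.
by rewrite card_rpart_fiber ?card_compositions // -leq_divRL // -ltnS.
Qed.
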